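(* Let $A$ be a nonzero $n\times n$ matrix over $\mathbb{C}$ (or $\mathbb{R}$). Then $A^2\otimes A=A\otimes A^2$ if and only if $A^2=\mu A$ for some scalar $\mu$.
   Context: Here $\otimes$ denotes the Kronecker product of matrices: for $A=[a_{ij}]$, $A\otimes B$ is the block matrix whose $(i,j)$ block is $a_{ij}B$. *)

From mathcomp Require Import all_boot all_order all_algebra.
From mathcomp Require Export mxtens.
(* Kronecker product: mxtens.tensmx, notation A *t B, with
   (A *t B) (i*p+k) (j*q+l) = A i j * B k l  (block (i,j) is a_ij B). *)

From mathcomp Require Import all_boot all_order all_algebra.
From mathcomp Require Import mxtens.
Import GRing.Theory Num.Theory.
Local Open Scope ring_scope.

(* Comparing the entries of [B *t A] and [A *t B] in rows (i, k) and columns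
   (j, l) gives [B i j * A k l = A i j * B k l]; fixing a nonzero entry
   [A k l] shows that [B] is the multiple [B k l / A k l] of [A]. *)

Lemma tensmx_scalel_comm (R : comPzRingType) m n (mu : R) (A : 'M[R]_(m, n)) :
  (mu *: A) *t A = A *t (mu *: A).
Proof. by apply/matrixP=> i j; rewrite !mxE mulrCA mulrA. Qed.

Lemma tensmx_commE {R : pzRingType} {m n} {A B : 'M[R]_(m, n)} i j k l :
  B *t A = A *t B -> B i j * A k l = A i j * B k l.
Proof.
move=> /matrixP/(_ (mxtens_index (i, k)) (mxtens_index (j, l))).
by rewrite !tensmxE.
Qed.

Lemma tensmx_comm_scalel (R : fieldType) m n (A B : 'M[R]_(m, n)) :
  A != 0 -> B *t A = A *t B -> exists mu : R, B = mu *: A.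
Proof.
move=> /matrix0Pn[k [l Akl_neq0]] BA_AB.
exists (B k l / A k l); apply/matrixP=> i j; rewrite mxE.
apply: (mulIf Akl_neq0).
by rewrite (tensmx_commE i j k l BA_AB) mulrAC divfK // mulrC.
Qed.

Theorem lemma2p6 (R : numFieldType) (n : nat) (A : 'M[R]_n) :
  A != 0 ->
  ((A *m A) *t A = A *t (A *m A) <-> exists mu : R, A *m A = mu *: A).
Proof.
move=> A_neq0; split; first exact: tensmx_comm_scalel.
by move=> [mu ->]; exact: tensmx_scalel_comm.
Qed.
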